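(* Let $\{|a_i\rangle\}$, $\{|b_j\rangle\}$ be orthonormal bases of finite-dimensional systems $A$, $B$, $n=\min\{\dim A,\dim B\}$, and let $\rho_{AB}=\sum_{i,j=1}^n\rho_{ij}|a_i\rangle\langle a_j|\otimes|b_i\rangle\langle b_j|$ be a state (a maximally correlated state). Let $E$ be an entanglement measure. Then $$Q^{AB}_E(\rho_{AB})=Q^A_E(\rho_{AB})=E_{A:B}(\rho_{AB}).$$
   Context: An entanglement measure $E$ assigns to each bipartite state $\tau_{X:Y}$ (of finite-dimensional systems, for any bipartition) a value $E_{X:Y}(\tau)$ that is nonnegative, zero on separable states, and does not increase under local operations and classical communication (in particular it is invariant under local unitaries/isometries). For a system $S$ of dimension $m$ with orthonormal basis $\{|s_k\rangle\}$, the measurement interaction is the isometry $V_S:S\to S\otimes S'$ ($S'$ $m$-dimensional with computational basis $\{|k\rangle\}$), $V_S|s_k\rangle=|s_k\rangle|k\rangle$. Define $Q^A_E(\rho_{AB})=\min E_{AB:A'}\big((V_A\otimes\mathbb I_B)\rho_{AB}(V_A\otimes\mathbb I_B)^\dagger\big)$ over orthonormal bases of $A$, and $Q^{AB}_E(\rho_{AB})=\min E_{AB:A'B'}\big((V_A\otimes V_B)\rho_{AB}(V_A\otimes V_B)^\dagger\big)$ over orthonormal bases of $A$ and $B$. *)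

From mathcomp Require Import all_boot all_algebra.
From mathcomp Require Import classical_sets reals.
From mathcomp.real_closed Require Import complex mxtens.

Set Implicit Arguments.
Unset Strict Implicit.
Unset Printing Implicit Defensive.

Import GRing.Theory Num.Theory.
Local Open Scope ring_scope.

Section Quantum.

Variable R : realType.
Local Notation C := (R[i]).

Definition adjmx m n (A : 'M[C]_(m, n)) : 'M[C]_(n, m) :=
  \matrix_(i, j) (A j i)^*.

(* Positive semidefinite: <x|A|x> >= 0 for every vector x (written here with
   the row vector v = <x|, so <x|A|x> = v A v^dagger). *)
Definition psdmx n (A : 'M[C]_n) : Prop :=
  forall v : 'rV[C]_n, 0 <= (v *m A *m adjmx v) 0 0.

Definition is_state n (rho : 'M[C]_n) : Prop := psdmx rho /\ \tr rho = 1.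

(* Unitary matrix; its columns form an orthonormal basis. *)
Definition unitary_mx n (U : 'M[C]_n) : Prop := adjmx U *m U = 1%:M.

(* A bipartite system X:Y with dim X = dX, dim Y = dY has Hilbert space
   X (x) Y of dimension dX*dY, with the Kronecker ordering of [tensmx]. *)

Definition separable_state (dX dY : nat) (rho : 'M[C]_(dX * dY)) : Prop :=
  exists (K : nat) (p : 'I_K -> R) (sig : 'I_K -> 'M[C]_dX)
         (tau : 'I_K -> 'M[C]_dY),
    [/\ forall k, 0 <= p k,
        \sum_(k < K) p k = 1,
        forall k, is_state (sig k) /\ is_state (tau k) &
        rho = \sum_(k < K) ((p k)%:C)%C *: tensmx (sig k) (tau k)].

(* LOCC instruments (finite-round LOCC, standard inductive definition):
   [LOCC_instr a b a' b' K Lam] : the family Lam of K CP maps (indexed by the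
   classical outcome) from states of A:B (dims a,b) to states of A':B'
   (dims a',b') is implementable by LOCC. *)
Inductive LOCC_instr : forall (a b a' b' K : nat),
    ('I_K -> 'M[C]_(a * b) -> 'M[C]_(a' * b')) -> Prop :=
  | LOCC_localA (a b a' K J : nat) (Kr : 'I_K -> 'I_J -> 'M[C]_(a', a)) :
      \sum_(k < K) \sum_(j < J) adjmx (Kr k j) *m Kr k j = 1%:M ->
      @LOCC_instr a b a' b K
        (fun k X => \sum_(j < J)
            tensmx (Kr k j) (1%:M : 'M[C]_b) *m X
              *m adjmx (tensmx (Kr k j) (1%:M : 'M[C]_b)))
  | LOCC_localB (a b b' K J : nat) (Kr : 'I_K -> 'I_J -> 'M[C]_(b', b)) :
      \sum_(k < K) \sum_(j < J) adjmx (Kr k j) *m Kr k j = 1%:M ->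
      @LOCC_instr a b a b' K
        (fun k X => \sum_(j < J)
            tensmx (1%:M : 'M[C]_a) (Kr k j) *m X
              *m adjmx (tensmx (1%:M : 'M[C]_a) (Kr k j)))
  | LOCC_coarse (a b a' b' K L : nat)
      (Lam : 'I_K -> 'M[C]_(a * b) -> 'M[C]_(a' * b')) (f : 'I_K -> 'I_L) :
      @LOCC_instr a b a' b' K Lam ->
      @LOCC_instr a b a' b' L (fun l X => \sum_(k < K | f k == l) Lam k X)
  (* classical communication: conditioned on the outcome k of a first LOCC
     instrument, an LOCC instrument Gam k is applied *)
  | LOCC_cond (a b a1 b1 a2 b2 K L : nat)
      (Lam : 'I_K -> 'M[C]_(a * b) -> 'M[C]_(a1 * b1))
      (Gam : 'I_K -> 'I_L -> 'M[C]_(a1 * b1) -> 'M[C]_(a2 * b2)) :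
      @LOCC_instr a b a1 b1 K Lam ->
      (forall k, @LOCC_instr a1 b1 a2 b2 L (Gam k)) ->
      @LOCC_instr a b a2 b2 (K * L)
        (fun kl X => Gam (mxtens_unindex kl).1 (mxtens_unindex kl).2
                         (Lam (mxtens_unindex kl).1 X)).

Definition LOCC_channel (a b a' b' : nat)
    (Phi : 'M[C]_(a * b) -> 'M[C]_(a' * b')) : Prop :=
  exists (K : nat) (Lam : 'I_K -> 'M[C]_(a * b) -> 'M[C]_(a' * b')),
    @LOCC_instr a b a' b' K Lam /\ forall X, Phi X = \sum_(k < K) Lam k X.

(* An entanglement measure: E dX dY rho = E_{X:Y}(rho) for every bipartition
   with dim X = dX, dim Y = dY. *)
Definition entanglement_measure
    (E : forall dX dY : nat, 'M[C]_(dX * dY) -> R) : Prop :=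
  [/\ forall dX dY (rho : 'M[C]_(dX * dY)), is_state rho -> 0 <= E dX dY rho,
      forall dX dY (rho : 'M[C]_(dX * dY)),
        is_state rho -> @separable_state dX dY rho -> E dX dY rho = 0 &
      forall dX dY dX' dY' (Phi : 'M[C]_(dX * dY) -> 'M[C]_(dX' * dY'))
             (rho : 'M[C]_(dX * dY)),
        @LOCC_channel dX dY dX' dY' Phi -> is_state rho -> E dX' dY' (Phi rho) <= E dX dY rho].

(* Measurement interaction V_A (x) I_B : A B -> (A B) A', with the basis
   |s_k> = col k U of A:  (V_A (x) I_B) |s_k>|y> = (|s_k>|y>)|k>, i.e. its
   matrix entry at row ((x,y),k), column (x',y') is
   <x|s_k><s_k|x'> * delta_{y y'}. *)
Definition VA (a b : nat) (U : 'M[C]_a) : 'M[C]_(a * b * a, a * b) :=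
  \matrix_(i, j)
    (let k := (mxtens_unindex i).2 in
     let x := (mxtens_unindex (mxtens_unindex i).1).1 in
     let y := (mxtens_unindex (mxtens_unindex i).1).2 in
     let x' := (mxtens_unindex j).1 in
     let y' := (mxtens_unindex j).2 in
     U x k * (U x' k)^* * (y == y')%:R).

(* V_A (x) V_B : A B -> (A B) (A' B'), bases col k U of A and col l W of B:
   entry at row ((x,y),(k,l)), column (x',y') is
   <x|s_k><s_k|x'> * <y|t_l><t_l|y'>. *)
Definition VAB (a b : nat) (U : 'M[C]_a) (W : 'M[C]_b) :
    'M[C]_(a * b * (a * b), a * b) :=
  \matrix_(i, j)
    (let k := (mxtens_unindex (mxtens_unindex i).2).1 in
     let l := (mxtens_unindex (mxtens_unindex i).2).2 in
     let x := (mxtens_unindex (mxtens_unindex i).1).1 in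
     let y := (mxtens_unindex (mxtens_unindex i).1).2 in
     let x' := (mxtens_unindex j).1 in
     let y' := (mxtens_unindex j).2 in
     U x k * (U x' k)^* * (W y l * (W y' l)^*)).

(* Q^A_E(rho) = min over orthonormal bases of A of E_{AB:A'}(V rho V^dagger)
   (taken as an infimum). *)
Definition QA (E : forall dX dY : nat, 'M[C]_(dX * dY) -> R) (a b : nat)
    (rho : 'M[C]_(a * b)) : R :=
  inf (fun q => exists U : 'M[C]_a, unitary_mx U /\
         q = E (a * b)%N a (@VA a b U *m rho *m adjmx (@VA a b U))).

(* Q^{AB}_E(rho) = min over orthonormal bases of A and B of
   E_{AB:A'B'}(V rho V^dagger) (taken as an infimum). *)
Definition QAB (E : forall dX dY : nat, 'M[C]_(dX * dY) -> R) (a b : nat)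
    (rho : 'M[C]_(a * b)) : R :=
  inf (fun q => exists (U : 'M[C]_a) (W : 'M[C]_b),
         unitary_mx U /\ unitary_mx W /\
         q = E (a * b)%N (a * b)%N (@VAB a b U W *m rho *m adjmx (@VAB a b U W))).

(* The maximally correlated operator
   sum_{i,j < n} r_ij |a_i><a_j| (x) |b_i><b_j|, n = min(dim A, dim B),
   with |a_i> = col i UA, |b_j> = col j UB. *)
Definition mcstate (a b : nat) (UA : 'M[C]_a) (UB : 'M[C]_b)
    (r : 'M[C]_(minn a b)) : 'M[C]_(a * b) :=
  \sum_(i < minn a b) \sum_(j < minn a b)
    r i j *: tensmx
      (col (widen_ord (geq_minl a b) i) UA
         *m adjmx (col (widen_ord (geq_minl a b) j) UA))
      (col (widen_ord (geq_minr a b) i) UB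
         *m adjmx (col (widen_ord (geq_minr a b) j) UB)).

End Quantum.

Arguments QA {R} E a b rho.
Arguments QAB {R} E a b rho.

(* A maximally correlated state is rho = sum_ij r_ij psi_i psi_j^dagger with the
   orthonormal vectors psi_i = a_i (x) b_i.  A local Kraus family carrying one
   orthonormal family onto another ("relabelling") maps such operators to
   operators with the same coefficients r, so by LOCC monotonicity E can only
   decrease under a relabelling.  Measuring in the bases {a_i} and {b_i} just
   attaches the labels |i> to psi_i, so E(rho) bounds the measured states from
   above.
   Conversely, for an arbitrary basis {s_k} of A, measure A with the POVM made of
   the 2^dim A normalised sign vectors (+-1, ..., +-1) in that basis: every
   outcome leaves the copy A' with a known sign pattern, which the holder of A'
   undoes by a local unitary.  This recovers rho (after relabelling) from
   V_A rho V_A^dagger by LOCC in the cut AB:A'; the same trick applied to B'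
   recovers V_A rho V_A^dagger from (V_A (x) V_B) rho (V_A (x) V_B)^dagger. *)

From mathcomp Require Import all_boot all_order all_algebra.
From mathcomp Require Import classical_sets reals.
From mathcomp.real_closed Require Import complex mxtens.
From mathcomp Require Import ring.

Set Implicit Arguments.
Unset Strict Implicit.
Unset Printing Implicit Defensive.

Import Order.TTheory GRing.Theory Num.Theory.
Local Open Scope ring_scope.

Section Quantum.

Variable R : realType.
Local Notation C := (R[i]).

Lemma adjmxK m n (A : 'M[C]_(m, n)) : adjmx (adjmx A) = A.
Proof. by apply/matrixP=> i j; rewrite !mxE conjCK. Qed.

Lemma adjmxM m n p (A : 'M[C]_(m, n)) (B : 'M[C]_(n, p)) :
  adjmx (A *m B) = adjmx B *m adjmx A.
Proof.
apply/matrixP=> i j; rewrite !mxE rmorph_sum; apply: eq_bigr => k _.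
by rewrite !mxE rmorphM mulrC.
Qed.

Lemma adjmxZ m n (c : C) (A : 'M[C]_(m, n)) : adjmx (c *: A) = c^* *: adjmx A.
Proof. by apply/matrixP=> i j; rewrite !mxE rmorphM. Qed.

Lemma adjmx_sum m n I (s : seq I) (P : pred I) (F : I -> 'M[C]_(m, n)) :
  adjmx (\sum_(i <- s | P i) F i) = \sum_(i <- s | P i) adjmx (F i).
Proof.
elim/big_rec2: _ => [|i A B _ <-]; apply/matrixP=> x y; rewrite !mxE ?rmorph0 //.
by rewrite rmorphD.
Qed.

Lemma adjmx1 n : adjmx (1%:M : 'M[C]_n) = 1%:M.
Proof.
by apply/matrixP=> i j; rewrite !mxE eq_sym; case: eqP; rewrite ?rmorph1 ?rmorph0.
Qed.

Lemma adjmx_tens m n p q (A : 'M[C]_(m, n)) (B : 'M[C]_(p, q)) :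
  adjmx (tensmx A B) = tensmx (adjmx A) (adjmx B).
Proof. by apply/matrixP=> i j; rewrite !mxE rmorphM. Qed.

Lemma adjmx_col n m (Q : 'M[C]_(n, m)) j : adjmx (col j Q) = row j (adjmx Q).
Proof. by apply/matrixP=> i k; rewrite !mxE. Qed.

Lemma sum_mxtens (V : nmodType) m n (F : 'I_(m * n) -> V) :
  \sum_(k < m * n) F k = \sum_(x < m) \sum_(y < n) F (mxtens_index (x, y)).
Proof.
rewrite pair_big /=; apply: reindex => /=; exists (@mxtens_unindex m n) => k _.
  by rewrite mxtens_indexK; case: k.
exact: mxtens_unindexK.
Qed.

Lemma eq_mxtens_unindex m n (k l : 'I_(m * n)) :
  (k == l) = ((mxtens_unindex k).1 == (mxtens_unindex l).1) &&
             ((mxtens_unindex k).2 == (mxtens_unindex l).2).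
Proof.
apply/eqP/andP => [->|[/eqP h1 /eqP h2]] //.
rewrite -[k]mxtens_unindexK -[l]mxtens_unindexK; congr mxtens_index.
exact: injective_projections.
Qed.

Lemma tensmx11 m n : tensmx (1%:M : 'M[C]_m) (1%:M : 'M[C]_n) = 1%:M.
Proof.
apply/matrixP=> i j; rewrite !mxE (eq_mxtens_unindex i j).
by do 2 case: eqP => _; rewrite ?mulr1 ?mulr0 ?mul0r.
Qed.

Lemma tensmxvE m n (x : 'cV[C]_m) (y : 'cV[C]_n) i j (k : 'I_(1 * 1)) :
  tensmx x y (mxtens_index (i, j)) k = x i 0 * y j 0.
Proof. by rewrite mxE mxtens_indexK /=; congr (x _ _ * y _ _); apply: ord1. Qed.

Lemma tensmxZl m n p q c (A : 'M[C]_(m, n)) (B : 'M[C]_(p, q)) :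
  tensmx (c *: A) B = c *: tensmx A B.
Proof. by apply/matrixP=> i j; rewrite !mxE mulrA. Qed.

Lemma tensmxZr m n p q c (A : 'M[C]_(m, n)) (B : 'M[C]_(p, q)) :
  tensmx A (c *: B) = c *: tensmx A B.
Proof. by apply/matrixP=> i j; rewrite !mxE mulrCA. Qed.

Lemma tensmx_suml m n p q I (s : seq I) (P : pred I) (A : I -> 'M[C]_(m, n))
    (B : 'M[C]_(p, q)) :
  tensmx (\sum_(i <- s | P i) A i) B = \sum_(i <- s | P i) tensmx (A i) B.
Proof.
apply/matrixP=> i j; rewrite !mxE !summxE mulr_suml.
by apply: eq_bigr => k _; rewrite !mxE.
Qed.

Lemma tensmx_sumr m n p q I (s : seq I) (P : pred I) (A : 'M[C]_(m, n))
    (B : I -> 'M[C]_(p, q)) :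
  tensmx A (\sum_(i <- s | P i) B i) = \sum_(i <- s | P i) tensmx A (B i).
Proof.
apply/matrixP=> i j; rewrite !mxE !summxE mulr_sumr.
by apply: eq_bigr => k _; rewrite !mxE.
Qed.

Lemma tensmx_mulv m n m' n' (A : 'M[C]_(m', m)) (B : 'M[C]_(n', n))
    (x : 'cV[C]_m) (y : 'cV[C]_n) :
  tensmx A B *m (tensmx x y : 'cV_(m * n)) = (tensmx (A *m x) (B *m y) : 'cV_(m' * n')).
Proof. exact: (@tensmx_mul _ m' m n' n 1 1 A B x y). Qed.

Lemma tensmx_outer m n (x1 x2 : 'cV[C]_m) (y1 y2 : 'cV[C]_n) :
  (tensmx x1 y1 : 'cV_(m * n)) *m adjmx (tensmx x2 y2 : 'cV_(m * n)) =
  tensmx (x1 *m adjmx x2) (y1 *m adjmx y2).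
Proof.
by rewrite (@adjmx_tens m 1 n 1); exact: (@tensmx_mul _ m 1 n 1 m n x1 y1 (adjmx x2) (adjmx y2)).
Qed.

Lemma col_mulmx m n p (A : 'M[C]_(m, n)) (B : 'M[C]_(n, p)) j :
  col j (A *m B) = A *m col j B.
Proof. by rewrite !colE mulmxA. Qed.

Lemma mulmx_adj_sum_col q (Q : 'M[C]_q) :
  Q *m adjmx Q = \sum_j col j Q *m adjmx (col j Q).
Proof.
apply/matrixP=> x y; rewrite !mxE summxE; apply: eq_bigr => j _.
by rewrite !mxE big_ord1 !mxE.
Qed.

Lemma mulmx_col_sum p q (W : 'M[C]_(p, q)) (z : 'cV[C]_q) :
  W *m z = \sum_l z l 0 *: col l W.
Proof.
apply/matrixP=> x j; rewrite [j]ord1 summxE !mxE.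
by apply: eq_bigr => l _; rewrite !mxE mulrC.
Qed.

Lemma adjmx_col_mulv q (U : 'M[C]_q) (x : 'cV[C]_q) k :
  (adjmx (col k U) *m x) 0 0 = (adjmx U *m x) k 0.
Proof. by rewrite !mxE; apply: eq_bigr => j _; rewrite !mxE. Qed.

Lemma mul_diag_mx_col q (d : 'rV[C]_q) (z : 'cV[C]_q) :
  diag_mx d *m z = \sum_k (d 0 k * z k 0) *: (delta_mx k 0 : 'cV[C]_q).
Proof.
apply/matrixP=> k' j; rewrite [j]ord1 mul_diag_mx summxE !mxE.
rewrite (bigD1 k') //= big1 ?addr0 => [|k /negbTE hk]; first by rewrite !mxE !eqxx mulr1.
by rewrite !mxE eq_sym hk mulr0.
Qed.

Lemma widen_ord_eq n q (hq : (n <= q)%N) (i j : 'I_n) :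
  (widen_ord hq i == widen_ord hq j) = (i == j).
Proof. by apply/eqP/eqP => [/(congr1 val) /= h|->]; first exact: val_inj. Qed.

Lemma unitary_mx1 q : unitary_mx (1%:M : 'M[C]_q).
Proof. by rewrite /unitary_mx adjmx1 mul1mx. Qed.

Lemma unitary_col_orth q (Q : 'M[C]_q) j i : unitary_mx Q ->
  adjmx (col j Q) *m col i Q = (j == i)%:R%:M.
Proof.
move=> hQ; rewrite adjmx_col -row_mul -col_mulmx hQ.
by apply/matrixP=> x y; rewrite !ord1 !mxE eqxx mulr1n.
Qed.

Lemma unitary_col_norm a (U : 'M[C]_a) k : unitary_mx U ->
  \sum_x (U x k)^* * U x k = 1.
Proof.
move=> /(congr1 (fun M : 'M[C]_a => M k k)); rewrite /= !mxE eqxx mulr1n => <-.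
by apply: eq_bigr => x _; rewrite mxE.
Qed.

Lemma unitary_row_orth a (U : 'M[C]_a) x1 x2 : unitary_mx U ->
  \sum_k U x1 k * (U x2 k)^* = (x1 == x2)%:R.
Proof.
move=> /mulmx1C /(congr1 (fun M : 'M[C]_a => M x1 x2)); rewrite /= !mxE => <-.
by apply: eq_bigr => k _; rewrite mxE.
Qed.

Lemma unitary_row_orth_weighted a (U : 'M[C]_a) x1 x2 : unitary_mx U ->
  \sum_x \sum_k ((U x k)^* * U x k * (U x1 k * (U x2 k)^*)) = (x1 == x2)%:R.
Proof.
move=> hU; rewrite exchange_big /=.
under eq_bigr do rewrite -mulr_suml unitary_col_norm // mul1r.
exact: unitary_row_orth.
Qed.

Definition orthonormal n p (v : 'I_n -> 'cV[C]_p) :=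
  forall i j, adjmx (v i) *m v j = (i == j)%:R%:M.

Lemma orthonormal_col q n (Q : 'M[C]_q) (hq : (n <= q)%N) : unitary_mx Q ->
  orthonormal (fun i => col (widen_ord hq i) Q).
Proof. by move=> hQ i j; rewrite unitary_col_orth // widen_ord_eq. Qed.

Lemma orthonormal_delta q n (hq : (n <= q)%N) :
  orthonormal (fun i => (delta_mx (widen_ord hq i) 0 : 'cV[C]_q)).
Proof. by move=> i j; rewrite -!col1; apply/orthonormal_col/unitary_mx1. Qed.

Lemma orthonormal_tens n p s (v : 'I_n -> 'cV[C]_p) (w : 'I_n -> 'cV[C]_s) :
  orthonormal v -> orthonormal w -> orthonormal (fun i => (tensmx (v i) (w i) : 'cV_(p * s))).
Proof.
move=> hv hw i j; rewrite (@adjmx_tens p 1 s 1).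
rewrite (@tensmx_mul _ 1 p 1 s 1 1 (adjmx (v i)) (adjmx (w i)) (v j) (w j)) hv hw.
apply/matrixP=> x y; rewrite !mxE !ord1 /=.
by case: (i == j); rewrite /= ?mulr1 ?mulr0n ?mul0r.
Qed.

Lemma is_state_conj_iso p q (V : 'M[C]_(q, p)) (rho : 'M[C]_p) :
  is_state rho -> adjmx V *m V = 1%:M -> is_state (V *m rho *m adjmx V).
Proof.
move=> [hpsd htr] hV; split; last by rewrite mxtrace_mulC mulmxA hV mul1mx.
by move=> v; have := hpsd (v *m V); rewrite adjmxM !mulmxA.
Qed.


Definition mxcorr n d (r : 'M[C]_n) (psi : 'I_n -> 'cV[C]_d) : 'M[C]_d :=
  \sum_i \sum_j r i j *: (psi i *m adjmx (psi j)).

Lemma mxcorr_conj p d n (r : 'M[C]_n) (psi : 'I_n -> 'cV[C]_d) (K : 'M[C]_(p, d)) :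
  K *m mxcorr r psi *m adjmx K = mxcorr r (fun i => K *m psi i).
Proof.
rewrite /mxcorr mulmx_sumr mulmx_suml; apply: eq_bigr => i _.
rewrite mulmx_sumr mulmx_suml; apply: eq_bigr => j _.
by rewrite -scalemxAr -scalemxAl adjmxM !mulmxA.
Qed.

Lemma mxcorrZ n d (r : 'M[C]_n) (psi : 'I_n -> 'cV[C]_d) (c : C) :
  mxcorr r (fun i => c *: psi i) = (c * c^*) *: mxcorr r psi.
Proof.
rewrite /mxcorr scaler_sumr; apply: eq_bigr => i _.
rewrite scaler_sumr; apply: eq_bigr => j _.
by rewrite adjmxZ -scalemxAl -scalemxAr !scalerA; congr (_ *: _); ring.
Qed.

Lemma eq_mxcorr n d (r : 'M[C]_n) (psi phi : 'I_n -> 'cV[C]_d) :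
  (forall i, psi i = phi i) -> mxcorr r psi = mxcorr r phi.
Proof. by move=> h; rewrite /mxcorr; apply: eq_bigr => i _; apply: eq_bigr => j _; rewrite !h. Qed.

Lemma sum_mxcorr_delta0 n d q (r : 'M[C]_n) (psi : 'I_n -> 'cV[C]_d) :
  (0 < q)%N -> \sum_(j < q) mxcorr r (fun i => ((j : nat) == 0)%:R *: psi i) = mxcorr r psi.
Proof.
move=> q0; rewrite (bigD1 (Ordinal q0)) //= big1 ?addr0.
  by rewrite mxcorrZ /= conjC1 mulr1 scale1r.
move=> j /negbTE hj; rewrite mxcorrZ.
suff -> : (j : nat) == 0 = false by rewrite mul0r scale0r.
by apply: contraFF hj => /eqP j0; apply/eqP/val_inj.
Qed.

Definition kraus p q J (K : 'I_J -> 'M[C]_(p, q)) := \sum_j adjmx (K j) *m K j = 1%:M.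

Lemma kraus_mulmxr J p q q' (K : 'I_J -> 'M[C]_(p, q)) (V : 'M[C]_(q, q')) :
  kraus K -> adjmx V *m V = 1%:M -> kraus (fun j => K j *m V).
Proof.
rewrite /kraus => hK hV.
under eq_bigr do rewrite adjmxM -mulmxA (mulmxA (adjmx (K _))).
by rewrite -mulmx_sumr -mulmx_suml hK mul1mx.
Qed.

Definition LOCC_op a b a' b' (Phi : 'M[C]_(a * b) -> 'M[C]_(a' * b')) :=
  @LOCC_instr R a b a' b' 1 (fun _ => Phi).

Lemma LOCC_op_channel a b a' b' (Phi : 'M[C]_(a * b) -> 'M[C]_(a' * b')) :
  LOCC_op Phi -> LOCC_channel Phi.
Proof. by move=> h; exists 1%N, (fun _ => Phi); split => // X; rewrite big_ord1. Qed.

Lemma LOCC_op_comp a b a1 b1 a2 b2 (Phi1 : 'M[C]_(a * b) -> 'M[C]_(a1 * b1))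
    (Phi2 : 'M[C]_(a1 * b1) -> 'M[C]_(a2 * b2)) :
  LOCC_op Phi1 -> LOCC_op Phi2 -> LOCC_op (fun X => Phi2 (Phi1 X)).
Proof. by move=> h1 h2; apply: (@LOCC_cond R _ _ _ _ _ _ 1 1 _ (fun _ _ => Phi2) h1). Qed.

Lemma LOCC_op_cond a b a1 b1 a2 b2 K (Lam : 'I_K -> 'M[C]_(a * b) -> 'M[C]_(a1 * b1))
    (Gam : 'I_K -> 'M[C]_(a1 * b1) -> 'M[C]_(a2 * b2)) :
  LOCC_instr Lam -> (forall k, LOCC_op (Gam k)) ->
  LOCC_op (fun X => \sum_(k < K) Gam k (Lam k X)).
Proof.
move=> hL hG.
have := LOCC_coarse (fun _ => ord0) (@LOCC_cond R _ _ _ _ _ _ K 1 Lam (fun k _ => Gam k) hL hG).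
rewrite /LOCC_op.
suff -> : (fun (_ : 'I_1) (X : 'M[C]_(a * b)) => \sum_(k < K) Gam k (Lam k X)) =
  (fun l X => \sum_(k < K * 1 | ord0 == l)
     Gam (mxtens_unindex k).1 (Lam (mxtens_unindex k).1 X)) by [].
apply: boolp.funext => l; apply: boolp.funext => X.
rewrite (ord1 l) (eq_bigl xpredT) // sum_mxtens; apply: eq_bigr => k _.
by rewrite big_ord1 mxtens_indexK.
Qed.

Lemma LOCC_op_localA a b a' J (K : 'I_J -> 'M[C]_(a', a)) : kraus K ->
  LOCC_op (fun X : 'M[C]_(a * b) => \sum_j tensmx (K j) (1%:M : 'M[C]_b) *m X
     *m adjmx (tensmx (K j) (1%:M : 'M[C]_b))).
Proof. by move=> hK; apply: (@LOCC_localA R a b a' 1 J (fun _ j => K j)); rewrite big_ord1. Qed.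

Lemma LOCC_op_localB a b b' J (K : 'I_J -> 'M[C]_(b', b)) : kraus K ->
  LOCC_op (fun X : 'M[C]_(a * b) => \sum_j tensmx (1%:M : 'M[C]_a) (K j) *m X
     *m adjmx (tensmx (1%:M : 'M[C]_a) (K j))).
Proof. by move=> hK; apply: (@LOCC_localB R a b b' 1 J (fun _ j => K j)); rewrite big_ord1. Qed.

Section Relabel.

Variables (n p q : nat) (v : 'I_n -> 'cV[C]_p) (Q : 'M[C]_q) (hq : (n <= q)%N) (i0 : 'I_n).
Hypothesis hQ : unitary_mx Q.

Let n_gt0 : (0 < n)%N := leq_ltn_trans (leq0n i0) (ltn_ord i0).
Let q_gt0 : (0 < q)%N := leq_trans n_gt0 hq.

(* Outcome 0 is the partial isometry sending col i Q to v i; the outcomes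
   j >= n complete it to a Kraus family, the others are zero. *)
Definition relabel0 := \sum_(i < n) v i *m adjmx (col (widen_ord hq i) Q).
Definition relabel (j : 'I_q) : 'M[C]_(p, q) :=
  if (j == 0 :> nat) then relabel0
  else if (n <= j)%N then v i0 *m adjmx (col j Q) else 0.

Lemma relabel_col i j : relabel j *m col (widen_ord hq i) Q = (j == 0 :> nat)%:R *: v i.
Proof.
rewrite /relabel; case: eqP => [_|hj].
  rewrite /relabel0 mulmx_suml (bigD1 i) //= big1 ?addr0 => [|i' hi].
    by rewrite -mulmxA unitary_col_orth // eqxx mul_mx_scalar.
  by rewrite -mulmxA unitary_col_orth // widen_ord_eq (negbTE hi) mul_mx_scalar scale0r.
case: ifP => hn; last by rewrite mul0mx scale0r.
rewrite -mulmxA unitary_col_orth // mul_mx_scalar.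
suff -> : (j == widen_ord hq i) = false by rewrite !scale0r.
by apply/negbTE/eqP => /(congr1 val) /= h; move: hn; rewrite h leqNgt ltn_ord.
Qed.

Hypothesis hv : orthonormal v.

Lemma relabel0_norm : adjmx relabel0 *m relabel0 =
  \sum_(i < n) col (widen_ord hq i) Q *m adjmx (col (widen_ord hq i) Q).
Proof.
rewrite /relabel0 adjmx_sum mulmx_suml; apply: eq_bigr => i _.
rewrite mulmx_sumr (bigD1 i) //= big1 ?addr0 => [|i' /negbTE hi];
  rewrite adjmxM adjmxK !mulmxA -(mulmxA _ (adjmx (v i))) hv mul_mx_scalar.
  by rewrite eqxx scale1r.
by rewrite eq_sym hi scale0r mul0mx.
Qed.

Lemma relabel_kraus : kraus relabel.
Proof.
rewrite /kraus (bigID (fun j : 'I_q => (j < n)%N)) /=.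
rewrite (bigD1 (Ordinal q_gt0)) /=; last exact: n_gt0.
rewrite big1 ?addr0 => [|j /andP [hj hjn]]; last first.
  rewrite /relabel leqNgt hj /=.
  suff -> : (j == 0 :> nat) = false by rewrite mulmx0.
  by apply: contraNF hjn => /eqP j0; apply/eqP/val_inj.
rewrite {1}/relabel /= relabel0_norm.
under [X in _ + X = _]eq_bigr => j hj.
  have j0 : (j == 0 :> nat) = false by apply: contraNF hj => /eqP ->; exact: n_gt0.
  rewrite /relabel j0 leqNgt hj /= adjmxM adjmxK mulmxA -(mulmxA _ (adjmx (v i0))).
  rewrite hv eqxx mul_mx_scalar scale1r.
  over.
rewrite -(mulmx1C hQ) mulmx_adj_sum_col [in RHS](bigID (fun j : 'I_q => (j < n)%N)) /=.
by rewrite -(big_ord_narrow (F := fun j => col j Q *m adjmx (col j Q)) hq).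
Qed.

Lemma relabelA_mxcorr s (r : 'M[C]_n) (y : 'I_n -> 'cV[C]_s) :
  \sum_j tensmx (relabel j) (1%:M : 'M[C]_s) *m
     mxcorr r (fun i => tensmx (col (widen_ord hq i) Q) (y i))
     *m adjmx (tensmx (relabel j) (1%:M : 'M[C]_s))
  = mxcorr r (fun i => tensmx (v i) (y i)).
Proof.
rewrite -(sum_mxcorr_delta0 r (fun i => tensmx (v i) (y i)) q_gt0).
apply: eq_bigr => j _; rewrite mxcorr_conj; apply: eq_mxcorr => i.
by rewrite tensmx_mulv relabel_col // mul1mx tensmxZl.
Qed.

Lemma relabelB_mxcorr s (r : 'M[C]_n) (y : 'I_n -> 'cV[C]_s) :
  \sum_j tensmx (1%:M : 'M[C]_s) (relabel j) *m
     mxcorr r (fun i => tensmx (y i) (col (widen_ord hq i) Q))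
     *m adjmx (tensmx (1%:M : 'M[C]_s) (relabel j))
  = mxcorr r (fun i => tensmx (y i) (v i)).
Proof.
rewrite -(sum_mxcorr_delta0 r (fun i => tensmx (y i) (v i)) q_gt0).
apply: eq_bigr => j _; rewrite mxcorr_conj; apply: eq_mxcorr => i.
by rewrite tensmx_mulv relabel_col // mul1mx tensmxZr.
Qed.

End Relabel.


Definition nsign q := #|{ffun 'I_q -> bool}|.
Definition sign_fun q (m : 'I_(nsign q)) : {ffun 'I_q -> bool} := enum_val m.
Definition sgb (b : bool) : C := if b then -1 else 1.
Definition sign_row q (m : 'I_(nsign q)) : 'rV[C]_q := \row_k sgb (sign_fun m k).
Definition sign_amp q : C := sqrtC (nsign q)%:R^-1.
Definition sign_meas q q' (P : 'M[C]_(q, q')) (m : 'I_(nsign q)) : 'rV[C]_q' :=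
  sign_amp q *: (sign_row m *m P).

Lemma sgb_conj b : (sgb b)^* = sgb b.
Proof. by case: b; rewrite /sgb ?rmorphN rmorph1. Qed.

Lemma sgb_sq b : sgb b * sgb b = 1.
Proof. by case: b; rewrite /sgb ?mulrNN mulr1. Qed.

Lemma nsign_gt0 q : (0 < nsign q)%N.
Proof. by apply/card_gt0P; exists [ffun=> true]. Qed.

(* Flipping the sign at k is an involution on sign patterns that negates the
   summand when k != k'. *)
Lemma sgb_orth q (k k' : 'I_q) :
  \sum_(m < nsign q) sgb (sign_fun m k) * sgb (sign_fun m k') = (k == k')%:R * (nsign q)%:R.
Proof.
rewrite /sign_fun -(big_enum_val (fun f : {ffun 'I_q -> bool} => sgb (f k) * sgb (f k'))) /=.
case: eqP => [<-|hk].
  by under eq_bigr do rewrite sgb_sq; rewrite sumr_const mul1r.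
rewrite mul0r.
pose flip (f : {ffun 'I_q -> bool}) := [ffun x => if x == k then ~~ f x else f x].
have flipK : involutive flip.
  by move=> f; apply/ffunP=> x; rewrite !ffunE; case: eqP => //; rewrite negbK.
set S := \sum_(_ in _) _.
have SN : S = - S.
  rewrite {1}/S (reindex_inj (inv_inj flipK)) /S -sumrN; apply: eq_bigr => f _.
  rewrite !ffunE eqxx; case: eqP => [h|_]; first by case: hk; rewrite h.
  by case: (f k); rewrite /sgb /= ?mulN1r ?mul1r ?opprK.
have : S *+ 2 == 0 by rewrite mulr2n {2}SN subrr.
by rewrite mulrn_eq0 /= => /eqP.
Qed.

Lemma sign_amp_norm q : sign_amp q * (sign_amp q)^* = (nsign q)%:R^-1.
Proof.
have amp_real : (sign_amp q)^* = sign_amp q.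
  by apply: geC0_conj; rewrite sqrtC_ge0 invr_ge0 ler0n.
by rewrite amp_real -expr2 sqrtCK.
Qed.

Lemma sum_sign_amp q d (X : 'M[C]_d) :
  \sum_(m < nsign q) ((sign_amp q * (sign_amp q)^*) *: X) = X.
Proof.
rewrite -scaler_suml sumr_const card_ord sign_amp_norm -(mulr_natr (nsign q)%:R^-1).
by rewrite mulVf ?scale1r // pnatr_eq0 -lt0n nsign_gt0.
Qed.

Lemma sign_row_sum q : \sum_(m < nsign q) adjmx (sign_row m) *m sign_row m = (nsign q)%:R%:M.
Proof.
apply/matrixP=> k k'; rewrite summxE mxE.
rewrite (eq_bigr (fun m => sgb (sign_fun m k) * sgb (sign_fun m k'))) => [|m _].
  by rewrite sgb_orth mulr_natl.
by rewrite mxE big_ord1 !mxE sgb_conj.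
Qed.

Lemma sign_meas_kraus q q' (P : 'M[C]_(q, q')) : adjmx P *m P = 1%:M -> kraus (sign_meas P).
Proof.
rewrite /kraus /sign_meas => hP.
under eq_bigr do rewrite adjmxZ -scalemxAl -scalemxAr scalerA adjmxM
   -mulmxA (mulmxA (adjmx (sign_row _))).
rewrite -scaler_sumr -mulmx_sumr -mulmx_suml sign_row_sum mul_scalar_mx -scalemxAr hP.
rewrite scalerA [(sign_amp q)^* * _]mulrC sign_amp_norm mulVf ?scale1r //.
by rewrite pnatr_eq0 -lt0n nsign_gt0.
Qed.

Lemma sign_meas_col q (U : 'M[C]_q) m k : unitary_mx U ->
  (sign_meas (adjmx U) m *m col k U) 0 0 = sign_amp q * sgb (sign_fun m k).
Proof.
move=> hU; rewrite -scalemxAl -mulmxA -col_mulmx hU mxE; congr (_ * _).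
rewrite mxE (bigD1 k) //= big1 ?addr0 => [|j /negbTE hj]; first by rewrite !mxE eqxx mulr1.
by rewrite !mxE hj mulr0.
Qed.

Lemma sign_diag_sq q m : diag_mx (sign_row m) *m diag_mx (sign_row m) = 1%:M :> 'M[C]_q.
Proof.
apply/matrixP=> i j; rewrite mul_diag_mx !mxE.
by case: eqP => [->|_]; rewrite ?sgb_sq ?mulr0 // mulr1n mulr1 sgb_sq.
Qed.

Lemma adjmx_sign_diag q m : adjmx (diag_mx (sign_row m)) = diag_mx (sign_row m) :> 'M[C]_q.
Proof.
apply/matrixP=> i j; rewrite !mxE eq_sym.
by case: eqP => [->|_]; rewrite ?rmorph0 ?mulr0n // !mulr1n sgb_conj.
Qed.

Lemma unitary_sign_diagr q (U : 'M[C]_q) m : unitary_mx U ->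
  adjmx (U *m diag_mx (sign_row m)) *m (U *m diag_mx (sign_row m)) = 1%:M.
Proof.
move=> hU; rewrite adjmxM adjmx_sign_diag -mulmxA (mulmxA (adjmx U)) hU mul1mx.
exact: sign_diag_sq.
Qed.

Lemma unitary_sign_diag_conj q (W : 'M[C]_q) m : unitary_mx W ->
  adjmx (W *m diag_mx (sign_row m) *m adjmx W) *m (W *m diag_mx (sign_row m) *m adjmx W)
  = 1%:M.
Proof.
move=> hW; rewrite !adjmxM adjmxK adjmx_sign_diag.
rewrite -!mulmxA (mulmxA (adjmx W)) hW mul1mx (mulmxA (diag_mx _)) sign_diag_sq mul1mx.
exact: (mulmx1C hW).
Qed.

(* [contractL b g] applies the functional g to the first tensor factor,
   [contractR a g] to the second one. *)
Definition contractL a b (g : 'rV[C]_a) : 'M[C]_(b, a * b) :=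
  \matrix_(y, j) (g 0 (mxtens_unindex j).1 * (y == (mxtens_unindex j).2)%:R).
Definition contractR a b (g : 'rV[C]_b) : 'M[C]_(a, a * b) :=
  \matrix_(x, j) (g 0 (mxtens_unindex j).2 * (x == (mxtens_unindex j).1)%:R).

Lemma contractL_tens a b (g : 'rV[C]_a) (x : 'cV[C]_a) (y : 'cV[C]_b) :
  contractL b g *m (tensmx x y : 'cV_(a * b)) = (g *m x) 0 0 *: y.
Proof.
apply/matrixP=> y0 z; rewrite [z]ord1 !mxE sum_mxtens mulr_suml.
apply: eq_bigr => x1 _; rewrite (bigD1 y0) //= big1 ?addr0 => [|y1 /negbTE hy].
  by rewrite tensmxvE !mxE !mxtens_indexK eqxx mulr1; ring.
by rewrite !mxE !mxtens_indexK /= eq_sym hy mulr0 mul0r.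
Qed.

Lemma contractR_tens a b (g : 'rV[C]_b) (x : 'cV[C]_a) (y : 'cV[C]_b) :
  contractR a g *m (tensmx x y : 'cV_(a * b)) = (g *m y) 0 0 *: x.
Proof.
apply/matrixP=> x0 z; rewrite [z]ord1 !mxE sum_mxtens mulr_suml exchange_big /=.
apply: eq_bigr => y1 _; rewrite (bigD1 x0) //= big1 ?addr0 => [|x1 /negbTE hx].
  by rewrite tensmxvE !mxE !mxtens_indexK eqxx mulr1; ring.
by rewrite !mxE !mxtens_indexK /= eq_sym hx mulr0 mul0r.
Qed.

Lemma contractL_kraus a b M (G : 'I_M -> 'rV[C]_a) :
  kraus G -> kraus (fun m => contractL b (G m)).
Proof.
move=> hG; apply/matrixP=> j1 j2.
case: (mxtens_indexP j1) => x1 y1; case: (mxtens_indexP j2) => x2 y2.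
have := congr1 (fun M : 'M[C]_a => M x1 x2) hG; rewrite /= !mxE summxE => hG'.
rewrite (eq_mxtens_unindex (mxtens_index (x1, y1))) !mxtens_indexK /= -mulnb natrM.
rewrite -hG' mulr_suml summxE; apply: eq_bigr => m _.
rewrite mxE [X in _ = X * _]mxE big_ord1 (bigD1 y1) //= big1 ?addr0 => [|y /negbTE hy].
  by rewrite !mxE !mxtens_indexK /= eqxx rmorphM rmorph_nat /=; ring.
by rewrite !mxE !mxtens_indexK /= hy rmorphM rmorph_nat /= mulr0 mul0r.
Qed.

Lemma contractR_kraus a b M (G : 'I_M -> 'rV[C]_b) :
  kraus G -> kraus (fun m => contractR a (G m)).
Proof.
move=> hG; apply/matrixP=> j1 j2.
case: (mxtens_indexP j1) => x1 y1; case: (mxtens_indexP j2) => x2 y2.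
have := congr1 (fun M : 'M[C]_b => M y1 y2) hG; rewrite /= !mxE summxE => hG'.
rewrite (eq_mxtens_unindex (mxtens_index (x1, y1))) !mxtens_indexK /= -mulnb natrM.
rewrite -hG' mulr_sumr summxE; apply: eq_bigr => m _.
rewrite mxE [X in _ = _ * X]mxE big_ord1 (bigD1 x1) //= big1 ?addr0 => [|x /negbTE hx].
  by rewrite !mxE !mxtens_indexK /= eqxx rmorphM rmorph_nat /=; ring.
by rewrite !mxE !mxtens_indexK /= hx rmorphM rmorph_nat /= mulr0 mul0r.
Qed.


Lemma VA_entry a b (U : 'M[C]_a) x y k x' y' :
  @VA R a b U (mxtens_index (mxtens_index (x, y), k)) (mxtens_index (x', y')) =
  U x k * (U x' k)^* * (y == y')%:R.
Proof. by rewrite mxE !mxtens_indexK. Qed.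

Lemma VAB_entry a b (U : 'M[C]_a) (W : 'M[C]_b) x y k l x' y' :
  @VAB R a b U W (mxtens_index (mxtens_index (x, y), mxtens_index (k, l)))
     (mxtens_index (x', y')) =
  U x k * (U x' k)^* * (W y l * (W y' l)^*).
Proof. by rewrite mxE !mxtens_indexK. Qed.

Lemma VA_tens a b (U : 'M[C]_a) (x : 'cV[C]_a) (y : 'cV[C]_b) :
  @VA R a b U *m tensmx x y = \sum_(k < a) ((adjmx (col k U) *m x) 0 0) *:
     tensmx (tensmx (col k U) y) (delta_mx k 0 : 'cV[C]_a).
Proof.
apply/matrixP=> I J.
case: (mxtens_indexP I) => ij k; case: (mxtens_indexP ij) => x0 y0.
rewrite [LHS]mxE sum_mxtens summxE.
under eq_bigr do under eq_bigr do rewrite VA_entry tensmxvE.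
under [RHS]eq_bigr do rewrite mxE tensmxvE tensmxvE.
rewrite [in RHS](bigD1 k) //= [in RHS]big1 ?addr0 => [|k0 /negbTE hk]; last first.
  by rewrite !mxE eq_sym hk /= mulr0n !mulr0.
rewrite !mxE !eqxx mulr1 mulr_suml.
apply: eq_bigr => x1 _; rewrite (bigD1 y0) //= big1 ?addr0 => [|y1 /negbTE hy].
  by rewrite !mxE eqxx /= mulr1; ring.
by rewrite eq_sym hy mulr0 mul0r.
Qed.

Lemma VAB_tens a b (U : 'M[C]_a) (W : 'M[C]_b) (x : 'cV[C]_a) (y : 'cV[C]_b) :
  @VAB R a b U W *m tensmx x y = \sum_(k < a) \sum_(l < b)
     (((adjmx (col k U) *m x) 0 0) * ((adjmx (col l W) *m y) 0 0)) *:
     tensmx (tensmx (col k U) (col l W))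
        (tensmx (delta_mx k 0 : 'cV[C]_a) (delta_mx l 0 : 'cV[C]_b)).
Proof.
apply/matrixP=> I J.
case: (mxtens_indexP I) => ij kl; case: (mxtens_indexP ij) => x0 y0.
case: (mxtens_indexP kl) => k l.
rewrite [LHS]mxE sum_mxtens summxE.
under eq_bigr do under eq_bigr do rewrite VAB_entry tensmxvE.
under [RHS]eq_bigr do rewrite summxE.
under [RHS]eq_bigr do under eq_bigr do rewrite mxE tensmxvE tensmxvE tensmxvE.
rewrite [in RHS](bigD1 k) //= [X in _ = _ + X]big1 ?addr0 => [|k0 /negbTE hk]; last first.
  by rewrite big1 // => l0 _; rewrite !mxE eq_sym hk /= mulr0n mul0r !mulr0.
rewrite [in RHS](bigD1 l) //= [X in _ = _ + X]big1 ?addr0 => [|l0 /negbTE hl]; last first.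
  by rewrite !mxE eq_sym hl /= mulr0n !mulr0.
rewrite !mxE !eqxx /= !mulr1 -mulrA mulr_suml; apply: eq_bigr => x1 _.
rewrite !mxE mulr_suml mulr_sumr; apply: eq_bigr => y1 _.
by rewrite !mxE; ring.
Qed.

Lemma VA_iso a b (U : 'M[C]_a) : unitary_mx U ->
  adjmx (@VA R a b U) *m @VA R a b U = 1%:M.
Proof.
move=> hU; apply/matrixP=> j1 j2.
case: (mxtens_indexP j1) => x1 y1; case: (mxtens_indexP j2) => x2 y2.
rewrite mxE !sum_mxtens mxE (eq_mxtens_unindex (mxtens_index (x1, y1))) !mxtens_indexK /=.
under eq_bigr do under eq_bigr do under eq_bigr do rewrite mxE VA_entry VA_entry.
have regroup x y k : (U x k * (U x1 k)^* * (y == y1)%:R)^* *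
           (U x k * (U x2 k)^* * (y == y2)%:R) =
   ((U x k)^* * U x k * (U x1 k * (U x2 k)^*)) * ((y == y1)%:R * (y == y2)%:R).
  by rewrite !rmorphM rmorph_nat /= conjCK; ring.
under eq_bigr do under eq_bigr do under eq_bigr do rewrite regroup.
under eq_bigr do rewrite exchange_big.
have sum_delta : \sum_(y < b) ((y == y1)%:R * (y == y2)%:R : C) = (y1 == y2)%:R.
  rewrite (bigD1 y1) //= big1 ?addr0 => [|y /negbTE ->]; last by rewrite mul0r.
  by rewrite eqxx mul1r eq_sym.
under eq_bigr do under eq_bigr do rewrite -mulr_sumr sum_delta.
rewrite exchange_big /=.
under eq_bigr do rewrite -mulr_suml -mulr_suml unitary_col_norm // mul1r.
by rewrite -mulr_suml unitary_row_orth // -natrM mulnb.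
Qed.

Lemma VAB_iso a b (U : 'M[C]_a) (W : 'M[C]_b) : unitary_mx U -> unitary_mx W ->
  adjmx (@VAB R a b U W) *m @VAB R a b U W = 1%:M.
Proof.
move=> hU hW; apply/matrixP=> j1 j2.
case: (mxtens_indexP j1) => x1 y1; case: (mxtens_indexP j2) => x2 y2.
rewrite mxE !sum_mxtens mxE (eq_mxtens_unindex (mxtens_index (x1, y1))) !mxtens_indexK /=.
under eq_bigr do under eq_bigr do rewrite sum_mxtens.
under eq_bigr do under eq_bigr do under eq_bigr do under eq_bigr do
  rewrite mxE VAB_entry VAB_entry.
have regroup x y k l : (U x k * (U x1 k)^* * (W y l * (W y1 l)^*))^* *
   (U x k * (U x2 k)^* * (W y l * (W y2 l)^*)) =
   ((U x k)^* * U x k * (U x1 k * (U x2 k)^*)) *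
   ((W y l)^* * W y l * (W y1 l * (W y2 l)^*)).
  by rewrite !rmorphM /= !conjCK; ring.
under eq_bigr do under eq_bigr do under eq_bigr do under eq_bigr do rewrite regroup.
under eq_bigr do under eq_bigr do under eq_bigr do rewrite -mulr_sumr.
under eq_bigr do rewrite exchange_big.
under eq_bigr do under eq_bigr do rewrite -mulr_sumr unitary_row_orth_weighted //.
under eq_bigr do rewrite -mulr_suml.
by rewrite -mulr_suml unitary_row_orth_weighted // -natrM mulnb.
Qed.

Lemma VA_col a b (U : 'M[C]_a) (y : 'cV[C]_b) k0 : unitary_mx U ->
  @VA R a b U *m tensmx (col k0 U) y =
  tensmx (tensmx (col k0 U) y) (delta_mx k0 0 : 'cV[C]_a).
Proof.
move=> hU; rewrite VA_tens (bigD1 k0) //= big1 ?addr0 => [|k /negbTE hk].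
  by rewrite unitary_col_orth // eqxx mxE eqxx /= mulr1n scale1r.
by rewrite unitary_col_orth // hk mxE eqxx /= mulr0n scale0r.
Qed.

Lemma VAB_col a b (U : 'M[C]_a) (W : 'M[C]_b) k0 l0 : unitary_mx U -> unitary_mx W ->
  @VAB R a b U W *m tensmx (col k0 U) (col l0 W) =
  tensmx (tensmx (col k0 U) (col l0 W))
    (tensmx (delta_mx k0 0 : 'cV[C]_a) (delta_mx l0 0 : 'cV[C]_b)).
Proof.
move=> hU hW; rewrite VAB_tens (bigD1 k0) //= [X in _ + X = _]big1 ?addr0 => [|k /negbTE hk].
  rewrite (bigD1 l0) //= big1 ?addr0 => [|l /negbTE hl].
    by rewrite !unitary_col_orth // !eqxx !mxE /= mulr1n mulr1 scale1r.
  by rewrite (unitary_col_orth _ _ hW) hl [X in _ * X]mxE /= mulr0n mulr0 scale0r.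
rewrite big1 // => l _.
by rewrite unitary_col_orth // hk mxE eqxx /= mulr0n mul0r scale0r.
Qed.


Lemma sign_meas_delta q m (k : 'I_q) :
  (sign_meas 1%:M m *m (delta_mx k 0 : 'cV[C]_q)) 0 0 = sign_amp q * sgb (sign_fun m k).
Proof. by rewrite -col1 -[X in sign_meas X]adjmx1 sign_meas_col //; apply: unitary_mx1. Qed.

Lemma sign_measA_VA a b (U : 'M[C]_a) (x : 'cV[C]_a) (y : 'cV[C]_b) m : unitary_mx U ->
  tensmx (contractL b (sign_meas (adjmx U) m)) (1%:M : 'M[C]_a) *m
    (@VA R a b U *m tensmx x y : 'cV_(a * b * a))
  = sign_amp a *: (tensmx y (diag_mx (sign_row m) *m (adjmx U *m x)) : 'cV_(b * a)).
Proof.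
move=> hU; rewrite VA_tens mulmx_sumr mul_diag_mx_col tensmx_sumr scaler_sumr.
apply: eq_bigr => k _.
rewrite -scalemxAr tensmx_mulv mul1mx contractL_tens sign_meas_col // tensmxZl tensmxZr.
rewrite !scalerA adjmx_col_mulv mxE; congr (_ *: _); rewrite [sign_row m 0 k]mxE; ring.
Qed.

Lemma sign_correct_relabel n p q s (v : 'I_n -> 'cV[C]_p) (Q U : 'M[C]_q)
    (hq : (n <= q)%N) (i0 : 'I_n) m (y : 'cV[C]_s) i j :
  unitary_mx Q -> unitary_mx U ->
  tensmx (1%:M : 'M[C]_s) (relabel v Q hq i0 j *m (U *m diag_mx (sign_row m))) *m
    (tensmx y (diag_mx (sign_row m) *m (adjmx U *m col (widen_ord hq i) Q)) : 'cV_(s * q))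
  = ((j : nat) == 0)%:R *: (tensmx y (v i) : 'cV_(s * p)).
Proof.
move=> hQ hU; rewrite tensmx_mulv mul1mx -!mulmxA (mulmxA (diag_mx _)) sign_diag_sq mul1mx.
by rewrite (mulmxA U) (mulmx1C hU) mul1mx relabel_col // tensmxZr.
Qed.

Lemma sign_measB_VAB a b (U : 'M[C]_a) (W : 'M[C]_b) (x : 'cV[C]_a) (y : 'cV[C]_b) m :
  unitary_mx U -> unitary_mx W ->
  tensmx (tensmx (1%:M : 'M[C]_a) (W *m diag_mx (sign_row m) *m adjmx W)) (1%:M : 'M[C]_a) *m
   (tensmx (1%:M : 'M[C]_(a * b)) (contractR a (sign_meas 1%:M m)) *m
    (@VAB R a b U W *m tensmx x y : 'cV_(a * b * (a * b))))
  = sign_amp b *: (@VA R a b U *m tensmx x y : 'cV_(a * b * a)).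
Proof.
move=> hU hW; set M := W *m diag_mx (sign_row m) *m adjmx W.
have y_flipped : y = M *m \sum_l (((adjmx (col l W) *m y) 0 0 * sgb (sign_fun m l)) *: col l W).
  have -> : \sum_l (((adjmx (col l W) *m y) 0 0 * sgb (sign_fun m l)) *: col l W)
     = W *m (diag_mx (sign_row m) *m (adjmx W *m y)).
    rewrite mulmx_col_sum; apply: eq_bigr => l _.
    rewrite mul_diag_mx !mxE mulrC; congr (_ *: _); congr (_ * _).
    by apply: eq_bigr => j _; rewrite !mxE.
  rewrite /M -!mulmxA (mulmxA (adjmx W)) hW mul1mx (mulmxA (diag_mx _)) sign_diag_sq.
  by rewrite mul1mx mulmxA (mulmx1C hW) mul1mx.
rewrite VAB_tens VA_tens !mulmx_sumr scaler_sumr; apply: eq_bigr => k _.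
rewrite !mulmx_sumr [in RHS]y_flipped mulmx_sumr tensmx_sumr tensmx_suml !scaler_sumr.
apply: eq_bigr => l _.
rewrite -!scalemxAr !tensmx_mulv !mul1mx contractR_tens sign_meas_delta.
rewrite (@tensmx_mul _ a a b b 1 1 1%:M M (col k U) (col l W)) mul1mx.
by rewrite !tensmxZr !tensmxZl !scalerA; congr (_ *: _); ring.
Qed.

Lemma inf_attained (S : set R) x : S x -> (forall y, S y -> x <= y) -> inf S = x.
Proof.
move=> Sx x_lb; apply/le_anti/andP; split.
  by apply: ge_inf Sx; exists x.
by apply: lb_le_inf; [exists x | exact: x_lb].
Qed.

Section MaximallyCorrelated.

Variables (E : forall dX dY : nat, 'M[C]_(dX * dY) -> R) (a b : nat).
Arguments E : clear implicits.
Variables (UA : 'M[C]_a) (UB : 'M[C]_b) (r : 'M[C]_(minn a b)).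
Hypotheses (hE : entanglement_measure E) (hA : unitary_mx UA) (hB : unitary_mx UB).
Hypothesis hrho : is_state (mcstate UA UB r).

Local Notation rho := (mcstate UA UB r).
Let hqa := geq_minl a b.
Let hqb := geq_minr a b.
Local Notation alpha i := (col (widen_ord hqa i) UA).
Local Notation beta i := (col (widen_ord hqb i) UB).

Lemma mcstateE : rho = mxcorr r (fun i => tensmx (alpha i) (beta i)).
Proof.
by apply: eq_bigr => i _; apply: eq_bigr => j _; rewrite tensmx_outer.
Qed.

Lemma minn_gt0 : (0 < minn a b)%N.
Proof.
rewrite lt0n; apply/negP => /eqP n0; case: hrho => _.
rewrite /mcstate big1 ?mxtrace0 => [/eqP|i _]; first by rewrite eq_sym oner_eq0.
by have := ltn_ord i; rewrite [X in (_ < X)%N]n0.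
Qed.

Let i0 := Ordinal minn_gt0.

Lemma E_mxcorr_ext_le p (w : 'I_(minn a b) -> 'cV[C]_p) : orthonormal w ->
  E (a * b)%N p
    (mxcorr r (fun i => (tensmx (tensmx (alpha i) (beta i) : 'cV_(a * b)) (w i)
                           : 'cV_(a * b * p))))
  <= E a b rho.
Proof.
move=> hw; have [_ _ E_mono] := hE.
have hpsi : orthonormal (fun i => (tensmx (alpha i) (beta i) : 'cV_(a * b))).
  by apply: orthonormal_tens; apply: orthonormal_col.
have relA := LOCC_op_localA b (relabel_kraus hqa i0 hA hpsi).
have relB := LOCC_op_localB (a * b) (relabel_kraus hqb i0 hB hw).
have := E_mono _ _ _ _ _ _ (LOCC_op_channel (LOCC_op_comp relA relB)) hrho.
congr (_ <= _); congr (E _ _ _) => /=.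
by rewrite mcstateE relabelA_mxcorr // relabelB_mxcorr.
Qed.

Lemma E_mcstate_le_VA U : unitary_mx U ->
  E a b rho <= E (a * b)%N a (@VA R a b U *m rho *m adjmx (@VA R a b U)).
Proof.
move=> hU; have [_ _ E_mono] := hE.
have a_gt0 : (0 < a)%N := leq_trans minn_gt0 hqa.
have measA : LOCC_instr (fun m (X : 'M[C]_(a * b * a)) => \sum_(j < 1)
     tensmx (contractL b (sign_meas (adjmx U) m)) (1%:M : 'M[C]_a) *m X *m
       adjmx (tensmx (contractL b (sign_meas (adjmx U) m)) (1%:M : 'M[C]_a))).
  apply: (@LOCC_localA R (a * b) a b (nsign a) 1 (fun m _ => contractL b (sign_meas _ m))).
  under eq_bigr do rewrite big_ord1.
  by apply/contractL_kraus/sign_meas_kraus; rewrite adjmxK; apply: mulmx1C.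
pose corrA m j := relabel (fun i => beta i) UA hqa i0 j *m (U *m diag_mx (sign_row m)).
have corrA_LOCC m : LOCC_op (fun X : 'M[C]_(b * a) => \sum_j
     tensmx (1%:M : 'M[C]_b) (corrA m j) *m X *m adjmx (tensmx (1%:M : 'M[C]_b) (corrA m j))).
  apply/LOCC_op_localB/kraus_mulmxr; last exact: unitary_sign_diagr.
  by apply: relabel_kraus => //; apply: orthonormal_col.
have relA := LOCC_op_localA b (relabel_kraus hqb i0 hB (orthonormal_col hqa hA)).
have Phi_LOCC := LOCC_op_channel (LOCC_op_comp (LOCC_op_cond measA corrA_LOCC) relA).
have := E_mono _ _ _ _ _ _ Phi_LOCC (is_state_conj_iso hrho (VA_iso b hU)).
congr (_ <= _); congr (E _ _ _) => /=.
rewrite mcstateE mxcorr_conj; set S := \sum_(m < nsign a) _.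
suff -> : S = mxcorr r (fun i => (tensmx (beta i) (beta i) : 'cV_(b * b))).
  exact: relabelA_mxcorr.
rewrite /S -(sum_sign_amp a (mxcorr r (fun i => (tensmx (beta i) (beta i) : 'cV_(b * b))))).
apply: eq_bigr => m _.
rewrite big_ord1 mxcorr_conj (eq_mxcorr _ (fun i => sign_measA_VA (alpha i) (beta i) m hU)).
rewrite mxcorrZ; under eq_bigr do rewrite -scalemxAr -scalemxAl mxcorr_conj.
rewrite -scaler_sumr; congr (_ *: _).
rewrite -(sum_mxcorr_delta0 r (fun i => (tensmx (beta i) (beta i) : 'cV_(b * b))) a_gt0).
by apply: eq_bigr => j _; apply: eq_mxcorr => i; apply: sign_correct_relabel.
Qed.

Lemma E_VA_le_VAB U W : unitary_mx U -> unitary_mx W ->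
  E (a * b)%N a (@VA R a b U *m rho *m adjmx (@VA R a b U)) <=
  E (a * b)%N (a * b)%N (@VAB R a b U W *m rho *m adjmx (@VAB R a b U W)).
Proof.
move=> hU hW; have [_ _ E_mono] := hE.
have measB : LOCC_instr (fun m (X : 'M[C]_(a * b * (a * b))) => \sum_(j < 1)
     tensmx (1%:M : 'M[C]_(a * b)) (contractR a (sign_meas 1%:M m)) *m X *m
       adjmx (tensmx (1%:M : 'M[C]_(a * b)) (contractR a (sign_meas 1%:M m)))).
  apply: (@LOCC_localB R (a * b) (a * b) a (nsign b) 1 (fun m _ => contractR a (sign_meas _ m))).
  under eq_bigr do rewrite big_ord1.
  by apply/contractR_kraus/sign_meas_kraus; rewrite adjmx1 mul1mx.
pose corrB m := tensmx (1%:M : 'M[C]_a) (W *m diag_mx (sign_row m) *m adjmx W).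
have corrB_LOCC m : LOCC_op (fun X : 'M[C]_(a * b * a) => \sum_(j < 1)
     tensmx (corrB m) (1%:M : 'M[C]_a) *m X *m adjmx (tensmx (corrB m) (1%:M : 'M[C]_a))).
  apply: (@LOCC_op_localA (a * b) a (a * b) 1 (fun _ => corrB m)).
  rewrite /kraus big_ord1 /corrB adjmx_tens adjmx1 tensmx_mul mul1mx.
  by rewrite unitary_sign_diag_conj // tensmx11.
have Phi_LOCC := LOCC_op_channel (LOCC_op_cond measB corrB_LOCC).
have := E_mono _ _ _ _ _ _ Phi_LOCC (is_state_conj_iso hrho (VAB_iso hU hW)).
congr (_ <= _); congr (E _ _ _) => /=.
rewrite !mcstateE !mxcorr_conj.
rewrite -(sum_sign_amp b (mxcorr r (fun i => @VA R a b U *m tensmx (alpha i) (beta i)))).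
apply: eq_bigr => m _; rewrite !big_ord1 !mxcorr_conj -mxcorrZ.
by apply: eq_mxcorr => i; apply: sign_measB_VAB.
Qed.

Lemma QA_mcstate : QA E a b rho = E a b rho.
Proof.
apply: inf_attained => [|_ [U [hU ->]]]; last exact: E_mcstate_le_VA.
exists UA; split => //; apply/le_anti/andP; split.
  exact: E_mcstate_le_VA.
rewrite {1}mcstateE mxcorr_conj (eq_mxcorr _ (fun i => VA_col (beta i) _ hA)).
exact: E_mxcorr_ext_le (orthonormal_delta hqa).
Qed.

Lemma QAB_mcstate : QAB E a b rho = E a b rho.
Proof.
have E_le_VAB U W : unitary_mx U -> unitary_mx W ->
    E a b rho <= E (a * b)%N (a * b)%N (@VAB R a b U W *m rho *m adjmx (@VAB R a b U W)).
  by move=> hU hW; apply/le_trans/E_VA_le_VAB/hW/hU/E_mcstate_le_VA.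
apply: inf_attained => [|_ [U [W [hU [hW ->]]]]]; last exact: E_le_VAB.
exists UA, UB; do 2!split => //; apply/le_anti/andP; split.
  exact: E_le_VAB.
rewrite {1}mcstateE mxcorr_conj (eq_mxcorr _ (fun i => VAB_col _ _ hA hB)).
exact: E_mxcorr_ext_le (orthonormal_tens (orthonormal_delta hqa) (orthonormal_delta hqb)).
Qed.

End MaximallyCorrelated.

End Quantum.

Theorem theorem15 (R : realType)
    (E : forall dX dY : nat, 'M[R[i]]_(dX * dY) -> R)
    (a b : nat) (UA : 'M[R[i]]_a) (UB : 'M[R[i]]_b)
    (r : 'M[R[i]]_(minn a b)) :
  entanglement_measure E ->
  unitary_mx UA -> unitary_mx UB ->
  is_state (mcstate UA UB r) ->
  QAB E a b (mcstate UA UB r) = QA E a b (mcstate UA UB r) /\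
  QA E a b (mcstate UA UB r) = E a b (mcstate UA UB r).
Proof.
by move=> hE hA hB hrho; rewrite QAB_mcstate // QA_mcstate.
Qed.
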